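(* Let $(X,d)$ be a metric space and let $U\subseteq F_{USCB}(X)$. Then $U$ is totally bounded in $(F_{USCB}(X),H_{\rm send})$ if and only if $U(0)=\bigcup_{u\in U}[u]_0$ is totally bounded in $X$.
   Context: A fuzzy set on $X$ is a function $u:X\to[0,1]$, with $\alpha$-cuts $[u]_\alpha=\{x: u(x)\ge\alpha\}$ for $\alpha\in(0,1]$ and $[u]_0=\overline{\{u>0\}}$. $F_{USC}(X)$ is the set of fuzzy sets with all $\alpha$-cuts ($\alpha\in[0,1]$) non-empty and closed; $F_{USCB}(X)=\{u\in F_{USC}(X): [u]_0\text{ is compact}\}$. $X\times[0,1]$ is metrized by $\overline{d}((x,\alpha),(y,\beta))=d(x,y)+|\alpha-\beta|$; ${\rm send}\,u=\{(x,t)\in X\times[0,1]: u(x)\ge t\}\cap([u]_0\times[0,1])$; $H_{\rm send}(u,v)=H({\rm send}\,u,{\rm send}\,v)$ where $H$ is the Hausdorff distance $H(A,B)=\max\{\sup_{a\in A}\inf_{b\in B}\overline{d}(a,b),\sup_{b\in B}\inf_{a\in A}\overline{d}(a,b)\}$. *)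

From HB Require Import structures.
From mathcomp Require Import all_boot all_order all_algebra.
From mathcomp Require Import all_classical all_reals all_analysis.
Set Implicit Arguments. Unset Strict Implicit. Unset Printing Implicit Defensive.
Import Order.TTheory GRing.Theory Num.Theory.
Local Open Scope classical_set_scope.
Local Open Scope ring_scope.

Section Fuzzy.
Context {R : realType} {X : metricType R}.

Definition fuzzy_valued (u : X -> R) := forall x, 0 <= u x <= 1.

Definition cut (u : X -> R) (a : R) : set X :=
  if a == 0 then closure [set x | 0 < u x] else [set x | a <= u x].

Definition F_USC : set (X -> R) :=
  [set u | fuzzy_valued u /\
     forall a : R, 0 <= a <= 1 -> cut u a !=set0 /\ closed (cut u a)].

Definition F_USCB : set (X -> R) :=
  [set u | F_USC u /\ compact (cut u 0)].

Definition dbar (p q : X * R) : R := mdist p.1 q.1 + `|p.2 - q.2|.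

Definition send (u : X -> R) : set (X * R) :=
  [set p | [/\ 0 <= p.2 <= 1, p.2 <= u p.1 & cut u 0 p.1]].

Definition hausdorff (A B : set (X * R)) : \bar R :=
  maxe (ereal_sup [set ereal_inf [set (dbar a b)%:E | b in B] | a in A])
       (ereal_sup [set ereal_inf [set (dbar a b)%:E | a in A] | b in B]).

Definition H_send (u v : X -> R) : \bar R := hausdorff (send u) (send v).

Definition totally_bounded_Hsend (U : set (X -> R)) :=
  forall eps : R, 0 < eps -> exists S : set (X -> R),
    [/\ finite_set S, S `<=` F_USCB &
        forall u, U u -> exists2 v, S v & (H_send u v < eps%:E)%E].

Definition totally_bounded_X (A : set X) :=
  forall eps : R, 0 < eps -> exists S : set X,
    finite_set S /\ forall x, A x -> exists2 y, S y & mdist x y < eps.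

Definition U0 (U : set (X -> R)) : set X := \bigcup_(u in U) cut u 0.

End Fuzzy.

(* If U is totally bounded for H_send, the 0-cuts of a finite eps/2-net are
   compact, hence covered by finitely many eps/2-balls; a point x of [u]_0
   gives (x, 0) in send u, which is eps/2-close to send v for some net element
   v, so these balls cover U(0) up to eps.
   Conversely, fix a finite d-net s of U(0) and a grid step 1/m.  Replacing u
   by the fuzzy set supported on s whose value at y is the largest value of u
   near y, rounded up to the grid, yields an element of F_USCB at H_send-distance
   at most d + 1/m from u, and there are only finitely many such fuzzy sets. *)

From Pilot Require Import Defs.
From HB Require Import structures.
From mathcomp Require Import all_boot all_order all_algebra.
From mathcomp Require Import all_classical all_reals all_analysis.
Set Implicit Arguments. Unset Strict Implicit. Unset Printing Implicit Defensive.
Import Order.TTheory GRing.Theory Num.Theory.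
Local Open Scope classical_set_scope.
Local Open Scope ring_scope.
Local Notation cut := Defs.cut.

Section MetricNets.
Context {R : realType} {X : metricType R}.

Definition is_net (s : seq X) (d : R) (A : set X) :=
  forall x, A x -> exists2 y, y \in s & mdist x y < d.

Lemma compact_finite_net (K : set X) (d : R) :
  compact K -> 0 < d -> exists s, is_net s d K.
Proof.
move=> cK d0; apply: contrapT => no_net.
pose B (s : seq X) := K `\` \bigcup_(y in [set` s]) ball y d.
have BF : Filter (filter_from setT B).
  apply: filter_from_filter => [|s1 s2 _ _]; first by exists [::].
  exists (s1 ++ s2) => // x [Kx Bx]; split; split => // -[y ys yx];
    by apply: Bx; exists y; rewrite //= mem_cat ys ?orbT.
have BP : ProperFilter (filter_from setT B).
  apply: filter_from_proper => // s _; apply: contrapT => /set0P/negP.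
  rewrite negbK => /eqP B0; apply: no_net; exists s => x Kx.
  apply: contrapT => far; suff : B s x by rewrite B0.
  by split=> // -[y ys]; rewrite ballEmdist /= metric_sym => ?; apply: far; exists y.
have [|p [Kp clp]] := cK _ BP; first by exists [::] => // x [].
have Bp : filter_from setT B (B [:: p]) by exists [:: p].
have [z [[_ zfar] pz]] := clp _ _ Bp (nbhsx_ballx p d d0).
by apply: zfar; exists p; rewrite //= inE.
Qed.

Lemma finite_set_closed (A : set X) : finite_set A -> closed A.
Proof. by move=> /finite_compact; apply: compact_closed; exact: metric_hausdorff. Qed.

End MetricNets.

Section FiniteFunctions.
Context {T U : choiceType}.

Lemma finite_set_funs_on (s : seq T) (t : seq U) (c : U) :
  finite_set [set v : T -> U | (forall y, y \notin s -> v y = c) /\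
                               forall y, v y \in t].
Proof.
pose decode (f : {ffun seq_sub s -> seq_sub t}) y :=
  if insub y is Some i then val (f i) else c.
apply: (@sub_finite_set _ _ (range decode)); last exact/finite_image/finite_finset.
move=> v [vs vt]; exists [ffun i => SeqSub (vt (val i))] => //.
apply/funext => y; rewrite /decode; case: insubP => [i _ <-|/vs //].
by rewrite ffunE.
Qed.

End FiniteFunctions.

Section Hausdorff.
Context {R : realType} {X : metricType R}.

Lemma hausdorff_lt_near (A B : set (X * R)) (r : R) (a : X * R) :
  (hausdorff A B < r%:E)%E -> A a -> exists2 b, B b & dbar a b < r.
Proof.
move=> ABr Aa.
have : (ereal_inf [set (dbar a b)%:E | b in B] < r%:E)%E.
  apply: le_lt_trans ABr; rewrite le_max; apply/orP; left.
  by apply: ereal_sup_ubound; exists a.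
by move=> /ereal_inf_lt [_ [b Bb <-]]; rewrite lte_fin; exists b.
Qed.

Lemma hausdorff_le (A B : set (X * R)) (r : R) :
  (forall a, A a -> exists2 b, B b & dbar a b <= r) ->
  (forall b, B b -> exists2 a, A a & dbar a b <= r) ->
  (hausdorff A B <= r%:E)%E.
Proof.
move=> AB BA; rewrite /hausdorff ge_max; apply/andP; split;
  apply: ge_ereal_sup => _ [a Aa <-]; apply: ge_ereal_inf.
  by have [b Bb ab] := AB _ Aa; exists (dbar a b)%:E; [exists b|rewrite lee_fin].
by have [b Bb ba] := BA _ Aa; exists (dbar b a)%:E; [exists b|rewrite lee_fin].
Qed.

Lemma mdist_le_dbar (p q : X * R) : mdist p.1 q.1 <= dbar p q.
Proof. by rewrite lerDl. Qed.

End Hausdorff.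

Section FuzzySets.
Context {R : realType} {X : metricType R}.
Implicit Types (u v : X -> R).

Lemma cut0_gt0 u x : 0 < u x -> cut u 0 x.
Proof. by rewrite /cut eqxx => ux; exact: subset_closure. Qed.

Lemma send_cut0 u x : fuzzy_valued u -> cut u 0 x -> send u (x, 0).
Proof. by move=> /(_ x) /andP[u0 _] ux; split; rewrite //= lexx ler01. Qed.

Lemma F_USC_max u : F_USC u -> exists x, u x = 1.
Proof.
move=> [u01 cuts]; have [|[x ux] _] := cuts 1; first by rewrite ler01 lexx.
rewrite /cut oner_eq0 in ux.
by exists x; apply/eqP; rewrite eq_le ux andbT; have /andP[] := u01 x.
Qed.

Lemma cut0_finite_support v :
  finite_set [set x | 0 < v x] -> cut v 0 = [set x | 0 < v x].
Proof. by move=> /finite_set_closed /closure_id; rewrite /cut eqxx => <-. Qed.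

Lemma F_USCB_finite_support v : fuzzy_valued v ->
  finite_set [set x | 0 < v x] -> (exists x, v x = 1) -> F_USCB v.
Proof.
move=> v01 fin [x1 vx1]; have c0 := cut0_finite_support fin.
split; last by rewrite c0; exact: finite_compact.
split=> // a /andP[a0 a1]; split.
  exists x1; rewrite /cut; case: eqP => _; last by rewrite /= vx1.
  by apply: subset_closure; rewrite /= vx1 ltr01.
rewrite /cut; case: eqP => [_|/eqP an0].
  by rewrite -c0 /cut eqxx; exact: closed_closure.
apply: finite_set_closed; apply: sub_finite_set fin => x /=.
by apply: lt_le_trans; rewrite lt_neqAle eq_sym an0.
Qed.

End FuzzySets.

Lemma totally_bounded_U0_of_Hsend {R : realType} {X : metricType R} (U : set (X -> R)) :
  U `<=` F_USCB -> totally_bounded_Hsend U -> totally_bounded_X (U0 U).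
Proof.
move=> UF TB eps eps0; have eps20 : 0 < eps / 2 by rewrite divr_gt0.
have [S [finS SF Snet]] := TB _ eps20.
have /choice [net netP] : forall v, exists s, S v -> is_net s (eps / 2) (cut v 0).
  move=> v; have [Sv|] := pselect (S v); last by exists [::].
  by have [s ?] := compact_finite_net (SF _ Sv).2 eps20; exists s.
exists (\bigcup_(v in S) [set` net v]); split.
  by apply: bigcup_finite => // v _; exact: finite_seq.
move=> x [u Uu xu]; have [v Sv uv] := Snet _ Uu.
have [[y t] [_ _ yv] xy] := hausdorff_lt_near uv (send_cut0 (UF _ Uu).1.1 xu).
have [z zv yz] := netP _ Sv _ yv.
exists z; first by exists v.
rewrite [eps]splitr (le_lt_trans (metric_triangle x y z)) // ltrD //.
exact: le_lt_trans (mdist_le_dbar _ _) xy.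
Qed.

Lemma grid_bracket {R : realType} (m : nat) (t : R) : (0 < m)%N -> 0 <= t <= 1 ->
  exists2 j, (j < m)%N & j%:R / m%:R <= t <= j.+1%:R / m%:R.
Proof.
move=> m0 /andP[t0 t1]; have m0R : 0 < m%:R :> R by rewrite ltr0n.
have /andP[jt tj] := truncn_itv (mulr_ge0 t0 (ltW m0R)).
have [jm|mj] := ltnP (Num.truncn (t * m%:R)) m.
  by exists (Num.truncn (t * m%:R)); rewrite // ler_pdivrMr // ler_pdivlMr // jt ltW.
exists m.-1; first by rewrite prednK.
rewrite prednK // divff ?gt_eqF // t1 andbT ler_pdivrMr //.
apply: le_trans jt; rewrite ler_nat; exact: leq_trans (leq_pred m) mj.
Qed.

Section Approximation.
Context {R : realType} {X : metricType R}.
Variables (s : seq X) (m : nat) (d : R).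
Hypothesis m_gt0 : (0 < m)%N.
Implicit Types (u : X -> R) (x y : X) (j : nat).

Let m_gt0R : 0 < m%:R :> R. Proof. by rewrite ltr0n. Qed.

Definition near_level u y j :=
  exists2 x, cut u 0 x /\ mdist x y < d & j%:R / m%:R <= u x.

(* The [.+1] rounds up, so that [approx u] dominates [u] near [s]. *)
Definition level u y := (\max_(j < m | `[< near_level u y j >]) j.+1)%N.

Definition approx u y : R := if y \in s then (level u y)%:R / m%:R else 0.

Lemma level_le u y : (level u y <= m)%N.
Proof. by apply/bigmax_leqP => j _; exact: ltn_ord. Qed.

Lemma level_ge u y j : (j < m)%N -> near_level u y j -> (j.+1 <= level u y)%N.
Proof.
move=> jm uyj; apply: (leq_bigmax_cond (Ordinal jm) (F := fun j : 'I_m => j.+1)).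
exact/asboolP.
Qed.

Lemma level_attained u y : (0 < level u y)%N ->
  exists2 j, near_level u y j & level u y = j.+1.
Proof.
rewrite /level.
case: (pickP (fun j : 'I_m => `[< near_level u y j >])) => [j uyj _|none];
  last by rewrite big_pred0.
have [|i /asboolP uyi max_i] :=
  @eq_bigmax_cond _ [pred j : 'I_m | `[< near_level u y j >]] (fun j : 'I_m => j.+1).
  by apply/card_gt0P; exists j.
by exists i.
Qed.

Lemma approx_fuzzy u : fuzzy_valued (approx u).
Proof.
move=> y; rewrite /approx; case: ifP => _; last by rewrite lexx ler01.
by rewrite divr_ge0 // ler_pdivrMr // mul1r ler_nat level_le.
Qed.

Lemma approx_gt0 u y : 0 < approx u y ->
  y \in s /\ exists2 j, near_level u y j & approx u y = j.+1%:R / m%:R.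
Proof.
rewrite /approx; case: ifP => ys; last by rewrite ltxx.
rewrite pmulr_lgt0 ?invr_gt0 // ltr0n => /level_attained [j uyj ->].
by split=> //; exists j.
Qed.

Lemma approx_ge u y j : y \in s -> (j < m)%N -> near_level u y j ->
  j.+1%:R / m%:R <= approx u y.
Proof.
by move=> ys jm uyj; rewrite /approx ys ler_pM2r ?invr_gt0 // ler_nat level_ge.
Qed.

Lemma approx_finite_support u : finite_set [set y | 0 < approx u y].
Proof. by apply: sub_finite_set (finite_seq s) => y /approx_gt0 []. Qed.

Lemma approx_F_USCB u : F_USC u -> is_net s d (cut u 0) -> F_USCB (approx u).
Proof.
move=> Fu unet; apply: F_USCB_finite_support (approx_finite_support u) _.
  exact: approx_fuzzy.
have [x ux1] := F_USC_max Fu.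
have [y ys xy] : exists2 y, y \in s & mdist x y < d by apply/unet/cut0_gt0; rewrite ux1.
have uy_top : near_level u y m.-1.
  exists x; first by split=> //; apply: cut0_gt0; rewrite ux1.
  by rewrite ux1 ler_pdivrMr // mul1r ler_nat leq_pred.
exists y; apply/eqP; rewrite eq_le (andP (approx_fuzzy u y)).2 /=.
have top_lt : (m.-1 < m)%N by rewrite prednK.
by have := approx_ge ys top_lt uy_top; rewrite prednK // divff ?gt_eqF.
Qed.

Lemma send_approx_near u p : is_net s d (cut u 0) -> send u p ->
  exists2 q, send (approx u) q & dbar p q <= d.
Proof.
case: p => x t unet [/= t01 tu xu]; have [y ys xy] := unet _ xu.
have [j jm /andP[jt tj]] := grid_bracket m_gt0 t01.
have yj := approx_ge ys jm (ex_intro2 _ _ x (conj xu xy) (le_trans jt tu)).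
exists (y, t); last by rewrite /dbar /= subrr normr0 addr0 ltW.
split=> //=; first exact: le_trans yj.
rewrite cut0_finite_support /=; last exact: approx_finite_support.
by apply: lt_le_trans yj; rewrite divr_gt0 ?ltr0n.
Qed.

Lemma approx_send_near u q : fuzzy_valued u -> send (approx u) q ->
  exists2 p, send u p & dbar p q <= d + m%:R^-1.
Proof.
case: q => y t u01 [/= /andP[t0 t1] ty].
rewrite cut0_finite_support /=; last exact: approx_finite_support.
move=> /approx_gt0 [_ [j [x [xu xy] jx] yj]]; rewrite {}yj in ty.
have /andP[ux0 ux1] := u01 x.
exists (x, Num.min t (u x)).
  split=> //=; last by rewrite ge_min lexx orbT.
  by rewrite le_min t0 ux0 ge_min t1.
rewrite /dbar /= lerD ?(ltW xy) //; have [_|ux_t] := leP t (u x).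
  by rewrite subrr normr0 invr_ge0 ler0n.
rewrite distrC ger0_norm ?subr_ge0 ?(ltW ux_t) // lerBlDr.
by apply: le_trans ty _; rewrite -natr1 mulrDl mul1r addrC lerD2l.
Qed.

Lemma H_send_approx u : fuzzy_valued u -> is_net s d (cut u 0) ->
  (H_send u (approx u) <= (d + m%:R^-1)%:E)%E.
Proof.
move=> u01 unet; apply: hausdorff_le.
  move=> p /(send_approx_near unet) [q uq pq]; exists q => //.
  by rewrite (le_trans pq) // lerDl invr_ge0 ler0n.
by move=> q /(approx_send_near u01) [p up pq]; exists p.
Qed.

Lemma finite_range_approx : finite_set (range approx).
Proof.
apply: sub_finite_set (finite_set_funs_on s [seq k%:R / m%:R | k <- iota 0 m.+1] 0).
move=> _ [u _ <-]; split=> y; rewrite /approx; first by move=> /negbTE ->.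
case: ifP => _; last by apply/mapP; exists 0%N; rewrite ?mul0r.
by apply/mapP; exists (level u y); rewrite // mem_iota ltnS level_le.
Qed.

End Approximation.

Lemma totally_bounded_Hsend_of_U0 {R : realType} {X : metricType R} (U : set (X -> R)) :
  U `<=` F_USCB -> totally_bounded_X (U0 U) -> totally_bounded_Hsend U.
Proof.
move=> UF TB eps eps0; have eps20 : 0 < eps / 2 by rewrite divr_gt0.
pose m := (Num.truncn (2 / eps)).+1.
have m_gt0 : (0 < m)%N by [].
have inv_m : m%:R^-1 < eps / 2.
  rewrite invf_plt ?posrE ?ltr0n // invf_div; exact: truncnS_gt.
have [N [finN Nnet]] := TB _ eps20; have [s sN] := (finite_seqP N).1 finN.
have unet u : U u -> is_net s (eps / 2) (cut u 0).
  by move=> Uu x xu; have [y] := Nnet x (ex_intro2 _ _ u Uu xu); rewrite sN; exists y.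
exists [set approx s m (eps / 2) u | u in U]; split.
- by apply: sub_finite_set (finite_range_approx s m (eps / 2)) => _ [u _ <-]; exists u.
- by move=> _ [u Uu <-]; exact: (approx_F_USCB m_gt0 (UF _ Uu).1 (unet _ Uu)).
- move=> u Uu; exists (approx s m (eps / 2) u); first by exists u.
  apply: le_lt_trans (H_send_approx m_gt0 (UF _ Uu).1.1 (unet _ Uu)) _.
  by rewrite lte_fin [ltRHS]splitr ltrD2l.
Qed.

Theorem theorem5p12 (R : realType) (X : metricType R) (U : set (X -> R)) :
  U `<=` F_USCB ->
  (totally_bounded_Hsend U <-> totally_bounded_X (U0 U)).
Proof.
move=> UF; split.
  exact: totally_bounded_U0_of_Hsend.
exact: totally_bounded_Hsend_of_U0.
Qed.
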